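(* Let $\Lambda=\langle a_1\rangle\perp\langle a_2\rangle$ be a skew-hermitian lattice such that $N(a_2)\in N(a_1)k^{*2}$ and the extension $k(a_1)/k$ is ramified. Then there exists a skew-hermitian lattice $L=\langle q\rangle\perp\langle\epsilon q\rangle$, with $q\in D^*$ and $\epsilon\in k^*$, such that $H(\Lambda)=H(L)$. Moreover, $q$ can be taken to be $q'$ for any pure quaternion $q'\in D^*$ with $N(q')\in N(a_1)k^{*2}$.
   Context: $k$ is a dyadic local field of characteristic $0$, $D$ the quaternion division algebra over $k$ with involution $q\mapsto\bar q$, reduced norm $N$, maximal order $\mathcal{O}_D$. A skew-hermitian space is a free $D$-module $V$ with nondegenerate $h$, $D$-linear in the first variable, $h(x,y)=-\overline{h(y,x)}$. For a pure quaternion $a$, $\langle a\rangle$ denotes a rank-one lattice $\mathcal{O}_Dx$ with $h(x,x)=a$, and $\perp$ denotes orthogonal sum. $H(\Lambda)\supseteq k^{*2}$ is defined by $H(\Lambda)/k^{*2}=\theta(\mathcal{U}^+_k(\Lambda))$, where $\mathcal{U}^+_k(\Lambda)$ is the group of isometries of $h$ preserving $\Lambda$ and $\theta$ the spinor norm ($\theta((s;\sigma))=N(\sigma)k^{*2}$ for simple rotations $(s;\sigma)(x)=x-h(x,s)\sigma^{-1}s$, $\sigma-\bar\sigma=h(s,s)$). *)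

From HB Require Import structures.
From mathcomp Require Import all_boot all_order all_algebra.
Set Implicit Arguments. Unset Strict Implicit. Unset Printing Implicit Defensive.
Import Order.TTheory GRing.Theory Num.Theory.
Local Open Scope ring_scope.

Section LocalField.
Variable k : fieldType.
Variable v : k -> int.   (* normalized discrete valuation; v 0 is irrelevant *)

Definition integral (x : k) : Prop := x = 0 \/ 0 <= v x.

Definition v_close (n : int) (x y : k) : Prop := x - y = 0 \/ n <= v (x - y).

Definition v_cauchy (u : nat -> k) : Prop :=
  forall n : int, exists N : nat, forall m p : nat,
    (N <= m)%N -> (N <= p)%N -> v_close n (u m) (u p).

Definition v_converges (u : nat -> k) (l : k) : Prop :=
  forall n : int, exists N : nat, forall m : nat, (N <= m)%N -> v_close n (u m) l.

Definition dyadic_local_field : Prop :=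
  (forall x y, x != 0 -> y != 0 -> v (x * y) = v x + v y) /\
      (forall x y, x != 0 -> y != 0 -> x + y != 0 ->
                   Num.min (v x) (v y) <= v (x + y)) /\
      (exists pi : k, pi != 0 /\ v pi = 1) /\
      (* finite residue field: finitely many residue classes of integers *)
      (exists r : seq k, (forall y, y \in r -> integral y) /\
          forall x, integral x -> exists2 y, y \in r & v_close 1 x y) /\
      (forall u, v_cauchy u -> exists l, v_converges u l) /\
      [pchar k] =i pred0 /\ 0 < v 2%:R.
End LocalField.

Record quat (k : Type) := Quat { q0 : k; q1 : k; q2 : k; q3 : k }.

Section Quat.
Variable k : fieldType.
Variables alpha beta : k.   (* i^2 = alpha, j^2 = beta, ij = -ji *)

Definition qk (c : k) : quat k := Quat c 0 0 0.
Definition qzero : quat k := qk 0.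
Definition qone : quat k := qk 1.
Definition qadd (a b : quat k) : quat k :=
  Quat (q0 a + q0 b) (q1 a + q1 b) (q2 a + q2 b) (q3 a + q3 b).
Definition qopp (a : quat k) : quat k := Quat (- q0 a) (- q1 a) (- q2 a) (- q3 a).
Definition qsub a b := qadd a (qopp b).
Definition qscal (c : k) (a : quat k) : quat k :=
  Quat (c * q0 a) (c * q1 a) (c * q2 a) (c * q3 a).
Definition qmul (a b : quat k) : quat k :=
  Quat (q0 a * q0 b + alpha * q1 a * q1 b + beta * q2 a * q2 b
          - alpha * beta * q3 a * q3 b)
       (q0 a * q1 b + q1 a * q0 b - beta * q2 a * q3 b + beta * q3 a * q2 b)
       (q0 a * q2 b + q2 a * q0 b + alpha * q1 a * q3 b - alpha * q3 a * q1 b)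
       (q0 a * q3 b + q3 a * q0 b + q1 a * q2 b - q2 a * q1 b).
Definition qconj (a : quat k) : quat k := Quat (q0 a) (- q1 a) (- q2 a) (- q3 a).
Definition qnorm (a : quat k) : k :=
  q0 a ^+ 2 - alpha * q1 a ^+ 2 - beta * q2 a ^+ 2 + alpha * beta * q3 a ^+ 2.
Definition qinv (a : quat k) : quat k := qscal (qnorm a)^-1 (qconj a).

Definition pure (a : quat k) : Prop := q0 a = 0.

Definition quat_division : Prop :=
  forall x, x <> qzero -> exists y, qmul x y = qone.

Variable v : k -> int.

Definition qcomb (cs : seq k) (gs : seq (quat k)) : quat k :=
  foldr (fun p acc => qadd (qscal p.1 p.2) acc) qzero (zip cs gs).

Definition is_order (O : quat k -> Prop) : Prop :=
  O qone /\
      (forall x y, O x -> O y -> O (qadd x y)) /\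
      (forall x, O x -> O (qopp x)) /\
      (forall x y, O x -> O y -> O (qmul x y)) /\
      (forall c x, integral v c -> O x -> O (qscal c x)) /\
      (* finitely generated over the valuation ring *)
      (exists gs : seq (quat k), (forall i, (i < size gs)%N -> O (nth qzero gs i)) /\
         forall x, O x -> exists cs : seq k, size cs = size gs /\
             (forall i, (i < size cs)%N -> integral v (nth 0 cs i)) /\ x = qcomb cs gs)
    /\ (* spans D over k *)
      (forall x, exists c : k, c != 0 /\ O (qscal c x)).

Definition maximal_order (O : quat k -> Prop) : Prop :=
  is_order O /\ forall O', is_order O' -> (forall x, O x -> O' x) ->
                           forall x, O' x -> O x.

(* k(a)/k ramified: the normalized extension w of v to K = k(a) = {x + y a},
   w(z) = v(N_{K/k} z)/2, takes a non-integral value (ramification index 2) *)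
Definition ramified (a : quat k) : Prop :=
  exists x y : k, (x != 0 \/ y != 0) /\
    ~ (exists m : int, v (qnorm (qadd (qk x) (qscal y a))) = 2 * m).

(* ---- the skew-hermitian space D^2 with h = diag(b1,b2) and the lattice
        Lambda = O_D e1 + O_D e2 = <b1> _|_ <b2> ---- *)
Definition vec := (quat k * quat k)%type.

Definition hform (b1 b2 : quat k) (x y : vec) : quat k :=
  qadd (qmul x.1 (qmul b1 (qconj y.1))) (qmul x.2 (qmul b2 (qconj y.2))).

Definition vsub (x y : vec) : vec := (qsub x.1 y.1, qsub x.2 y.2).
Definition vlscal (d : quat k) (x : vec) : vec := (qmul d x.1, qmul d x.2).

Definition simple_rot (b1 b2 : quat k) (s : vec) (sigma : quat k) (x : vec) : vec :=
  vsub x (vlscal (qmul (hform b1 b2 x s) (qinv sigma)) s).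

Definition valid_rot (b1 b2 : quat k) (r : vec * quat k) : Prop :=
  r.2 <> qzero /\ qsub r.2 (qconj r.2) = hform b1 b2 r.1 r.1.

Fixpoint all_valid (b1 b2 : quat k) (rs : seq (vec * quat k)) : Prop :=
  if rs is r :: rs' then valid_rot b1 b2 r /\ all_valid b1 b2 rs' else True.

Definition rot_prod (b1 b2 : quat k) (rs : seq (vec * quat k)) : vec -> vec :=
  foldr (fun r f => simple_rot b1 b2 r.1 r.2 \o f) id rs.

(* theta((s1;sigma1)...(sr;sigmar)) = N(sigma1)...N(sigmar) k*^2 *)
Definition norm_prod (rs : seq (vec * quat k)) : k :=
  foldr (fun r acc => qnorm r.2 * acc) 1 rs.

Variable O : quat k -> Prop.

Definition in_lattice (x : vec) : Prop := O x.1 /\ O x.2.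

Definition preserves_lattice (u : vec -> vec) : Prop :=
  (forall x, in_lattice x -> in_lattice (u x)) /\
  (forall y, in_lattice y -> exists x, in_lattice x /\ u x = y).

(* H(<b1> _|_ <b2>) : c \in H iff c \in k^* and c k*^2 = theta(u) for some
   u in U^+(Lambda), written as a product of simple rotations *)
Definition Hgroup (b1 b2 : quat k) (c : k) : Prop :=
  c != 0 /\ exists rs : seq (vec * quat k),
    [/\ all_valid b1 b2 rs, preserves_lattice (rot_prod b1 b2 rs) &
        exists t : k, t != 0 /\ c = norm_prod rs * t ^+ 2].

End Quat.

(* Since k(a1)/k is ramified, some [z = x + y a1], which commutes with [a1], has
   a reduced norm of odd valuation.  Given a pure [q'] with [N q'] in [N a1 k*^2],
   rescale it to [p] with [N p = N a1] and [a1 + p <> 0]; then [u = a1 + p]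
   satisfies [u a1 = p u], and multiplying [u] by a scalar or by a scalar multiple
   of [z] gives [d] with [N d] a unit and [d a1 dbar] in [k* q'].  The same holds
   for [a2], whose norm lies in the same square class.

   Quaternions of unit norm lie, with their inverses, in the maximal order: by
   Hensel's lemma the quaternions of integral norm have integral trace, so they
   form an order, and it contains every order.  Componentwise right
   multiplication by [d1^-1, d2^-1] is then a lattice automorphism turning [h]
   into a scalar multiple of the form of [<q'> _|_ <eps q'>]; it conjugates
   simple rotations into simple rotations whose spinor norms change by squares,
   so the two groups [H] coincide. *)

From HB Require Import structures.
From mathcomp Require Import all_boot all_order all_algebra.
From mathcomp Require Import ring zify.
From Stdlib Require Import Classical.
Import Order.TTheory GRing.Theory Num.Theory.
Local Open Scope ring_scope.
Set Implicit Arguments. Unset Strict Implicit. Unset Printing Implicit Defensive.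

Ltac quat_ring := repeat match goal with x : quat _ |- _ => destruct x end;
  rewrite /qzero /qone /qinv /qsub /qmul /qadd /qopp /qscal /qconj /qnorm /qk /=;
  f_equal; ring.

(* Generalizes every valuation [v _] in sight, so that [lia] sees integers. *)
Ltac vlia v := repeat
  (match goal with |- context [v ?x] =>
     let z := fresh "z" in set z := v x in *; clearbody z end
  || match goal with H : context [v ?x] |- _ =>
     let z := fresh "z" in set z := v x in *; clearbody z end); lia.

Section QuatAlgebra.
Variable k : fieldType.
Variables alpha beta : k.
Local Notation mul := (qmul alpha beta).
Local Notation nrm := (qnorm alpha beta).
Local Notation inv := (qinv alpha beta).

Lemma qmulA x y z : mul x (mul y z) = mul (mul x y) z. Proof. quat_ring. Qed.
Lemma qmul1 x : mul x (qone k) = x. Proof. quat_ring. Qed.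
Lemma qmul1l x : mul (qone k) x = x. Proof. quat_ring. Qed.
Lemma qmulDl x y z : mul (qadd x y) z = qadd (mul x z) (mul y z). Proof. quat_ring. Qed.
Lemma qmulDr x y z : mul z (qadd x y) = qadd (mul z x) (mul z y). Proof. quat_ring. Qed.
Lemma qmulNl x y : mul (qopp x) y = qopp (mul x y). Proof. quat_ring. Qed.
Lemma qmulZl c x y : mul (qscal c x) y = qscal c (mul x y). Proof. quat_ring. Qed.
Lemma qmulZr c x y : mul x (qscal c y) = qscal c (mul x y). Proof. quat_ring. Qed.
Lemma qmulkl c x : mul (qk c) x = qscal c x. Proof. quat_ring. Qed.
Lemma qmulkr c x : mul x (qk c) = qscal c x. Proof. quat_ring. Qed.
Lemma qconjM x y : qconj (mul x y) = mul (qconj y) (qconj x). Proof. quat_ring. Qed.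
Lemma qconjZ c (x : quat k) : qconj (qscal c x) = qscal c (qconj x). Proof. quat_ring. Qed.
Lemma qmul_conj x : mul x (qconj x) = qk (nrm x). Proof. quat_ring. Qed.
Lemma qmul_conjl x : mul (qconj x) x = qk (nrm x). Proof. quat_ring. Qed.
Lemma qaddC (x y : quat k) : qadd x y = qadd y x. Proof. quat_ring. Qed.
Lemma qadd0 (x : quat k) : qadd x (qzero k) = x. Proof. quat_ring. Qed.
Lemma qadd0l (x : quat k) : qadd (qzero k) x = x. Proof. quat_ring. Qed.
Lemma qsubK (x y : quat k) : qadd (qsub x y) y = x. Proof. quat_ring. Qed.
Lemma qoppK (x : quat k) : qopp (qopp x) = x. Proof. quat_ring. Qed.
Lemma qaddxx (x : quat k) : qadd x x = qscal 2%:R x. Proof. quat_ring. Qed.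
Lemma qscalA c d (x : quat k) : qscal c (qscal d x) = qscal (c * d) x. Proof. quat_ring. Qed.
Lemma qscal1 (x : quat k) : qscal 1 x = x. Proof. quat_ring. Qed.
Lemma qscalN c (x : quat k) : qscal (- c) x = qopp (qscal c x). Proof. quat_ring. Qed.
Lemma qscalD c (x y : quat k) : qscal c (qadd x y) = qadd (qscal c x) (qscal c y).
Proof. quat_ring. Qed.
Lemma qscalk c d : qscal c (qk d) = qk (c * d) :> quat k. Proof. quat_ring. Qed.
Lemma qsub_conjZ c (x : quat k) :
  qsub (qscal c x) (qconj (qscal c x)) = qscal c (qsub x (qconj x)).
Proof. quat_ring. Qed.
Lemma qnormM x y : nrm (mul x y) = nrm x * nrm y. Proof. quat_ring. Qed.
Lemma qnormZ c x : nrm (qscal c x) = c ^+ 2 * nrm x. Proof. quat_ring. Qed.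
Lemma qnormN x : nrm (qopp x) = nrm x. Proof. quat_ring. Qed.
Lemma qnormk c : nrm (qk c) = c ^+ 2. Proof. quat_ring. Qed.
Lemma qnorm1 : nrm (qone k) = 1. Proof. quat_ring. Qed.
Lemma qnorm0 : nrm (qzero k) = 0. Proof. quat_ring. Qed.
Lemma qnormD1 z : nrm (qadd z (qone k)) = 1 + 2%:R * q0 z + nrm z.
Proof. by case: z => ? ? ? ?; rewrite /qnorm /=; ring. Qed.

Lemma qadd_eq0 (x y : quat k) : qadd x y = qzero k -> y = qopp x.
Proof.
case: x y => [x0 x1 x2 x3] [y0 y1 y2 y3] [e0 e1 e2 e3].
by rewrite /qopp /=; f_equal; apply/eqP; rewrite -addr_eq0 addrC; apply/eqP.
Qed.

Lemma qsub_k_eq0 x c : qsub x (qk c) = qzero k -> x = qk c.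
Proof. by move=> h; rewrite -(qsubK x (qk c)) h qadd0l. Qed.

Lemma qmulV x : nrm x != 0 -> mul x (inv x) = qone k.
Proof. by move=> nx; rewrite /qinv qmulZr qmul_conj qscalk mulVf. Qed.

Lemma qmulVl x : nrm x != 0 -> mul (inv x) x = qone k.
Proof. by move=> nx; rewrite /qinv qmulZl qmul_conjl qscalk mulVf. Qed.

Lemma qnormV x : nrm x != 0 -> nrm (inv x) = (nrm x)^-1.
Proof.
move=> nx; have := congr1 nrm (qmulV nx); rewrite qnormM qnorm1 => h.
by apply: (mulfI nx); rewrite h mulfV.
Qed.

Lemma qinvK x : nrm x != 0 -> inv (inv x) = x.
Proof.
move=> nx; have ni : nrm (inv x) != 0 by rewrite qnormV // invr_eq0.
by rewrite -[RHS]qmul1l -(qmulVl ni) -qmulA qmulVl // qmul1.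
Qed.

Lemma qinvZ c x : c != 0 -> inv (qscal c x) = qscal c^-1 (inv x).
Proof.
move=> nc; rewrite /qinv qnormZ qconjZ !qscalA; congr qscal.
have [->|nx] := eqVneq (nrm x) 0; first by rewrite mulr0 invr0 !mul0r mulr0.
by field; rewrite nx nc.
Qed.

Lemma pure_scal c (q : quat k) : pure q -> pure (qscal c q).
Proof. by rewrite /pure /= => ->; rewrite mulr0. Qed.

Lemma pure_sqr a : pure a -> mul a a = qk (- nrm a).
Proof. by case: a => a0 ? ? ?; rewrite /pure /= => ->; quat_ring. Qed.

Lemma qnorm_pure_lin a (x y : k) :
  pure a -> nrm (qadd (qk x) (qscal y a)) = x ^+ 2 + y ^+ 2 * nrm a.
Proof. by case: a => a0 ? ? ?; rewrite /pure /= => ->; rewrite /qnorm /=; ring. Qed.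

Lemma pure_lin_comm a (x y : k) :
  mul (qadd (qk x) (qscal y a)) a = mul a (qadd (qk x) (qscal y a)).
Proof. quat_ring. Qed.

Lemma pure_add_intertwines a p : pure a -> pure p -> nrm a = nrm p ->
  mul (qadd a p) a = mul p (qadd a p).
Proof. by move=> pa pp E; rewrite qmulDl qmulDr pure_sqr // pure_sqr // E qaddC. Qed.

Lemma qCayley_Hamilton x r : r ^+ 2 - (2 * q0 x) * r + nrm x = 0 ->
  mul (qsub x (qk r)) (qsub x (qk (2 * q0 x - r))) = qzero k.
Proof.
case: x => x0 x1 x2 x3 /= E.
rewrite /qzero /qmul /qsub /qadd /qopp /qk /=; f_equal; try ring.
apply: (@eq_trans _ _ (- (r ^+ 2 - 2 * x0 * r + nrm (Quat x0 x1 x2 x3)))).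
  by rewrite /qnorm /=; ring.
by rewrite E oppr0.
Qed.

Section Division.
Hypothesis div : quat_division alpha beta.

Lemma qnorm_eq0 x : nrm x = 0 -> x = qzero k.
Proof.
move=> N0; apply: NNPP => /div [y xy].
have := congr1 nrm xy; rewrite qnormM qnorm1 N0 mul0r => /eqP.
by rewrite eq_sym oner_eq0.
Qed.

Lemma qnorm_neq0 x : x <> qzero k -> nrm x != 0.
Proof. by move=> nx; apply/eqP => /qnorm_eq0. Qed.

Lemma qmul_eq0 x y : mul x y = qzero k -> x = qzero k \/ y = qzero k.
Proof.
move=> /(congr1 nrm); rewrite qnormM qnorm0 => /eqP.
by rewrite mulf_eq0 => /orP [] /eqP /qnorm_eq0; [left|right].
Qed.

Lemma alpha_neq0 : alpha != 0.
Proof.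
apply/eqP => a0; have /qnorm_neq0 /eqP : Quat 0 1 0 0 <> qzero k.
  by move=> /(congr1 (@q1 k)) /eqP; rewrite oner_eq0.
by apply; rewrite /qnorm /= a0; ring.
Qed.

Lemma beta_neq0 : beta != 0.
Proof.
apply/eqP => b0; have /qnorm_neq0 /eqP : Quat 0 0 1 0 <> qzero k.
  by move=> /(congr1 (@q2 k)) /eqP; rewrite oner_eq0.
by apply; rewrite /qnorm /= b0; ring.
Qed.

End Division.
End QuatAlgebra.

Section ConjugateForms.
Variable k : fieldType.
Variables alpha beta : k.
Local Notation mul := (qmul alpha beta).
Local Notation nrm := (qnorm alpha beta).
Local Notation inv := (qinv alpha beta).

Lemma conj_inv_scal d b b' lam : lam != 0 -> nrm d != 0 ->
  qscal lam b' = mul d (mul b (qconj d)) ->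
  mul (inv d) (mul b' (qconj (inv d))) = qscal lam^-1 b.
Proof.
move=> nl nd E; have -> : b' = qscal lam^-1 (mul d (mul b (qconj d))).
  by rewrite -E qscalA mulVf // qscal1.
rewrite qmulZl qmulZr; congr qscal.
rewrite !qmulA qmulVl // qmul1l -qmulA -qconjM qmulVl //.
by rewrite /qone /qconj /qk /= oppr0 -/(qk 1) -/(qone k) qmul1.
Qed.

Variables b1 b2 b1' b2' d1 d2 : quat k.
Variable lam : k.
Hypothesis nl : lam != 0.
Hypothesis nd1 : nrm d1 != 0.
Hypothesis nd2 : nrm d2 != 0.
Hypothesis E1 : qscal lam b1' = mul d1 (mul b1 (qconj d1)).
Hypothesis E2 : qscal lam b2' = mul d2 (mul b2 (qconj d2)).

Definition vmulr_inv (x : vec k) : vec k := (mul x.1 (inv d1), mul x.2 (inv d2)).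
Definition vmulr (x : vec k) : vec k := (mul x.1 d1, mul x.2 d2).

Lemma vmulr_invK x : vmulr_inv (vmulr x) = x.
Proof. by case: x => x1 x2; rewrite /vmulr_inv /vmulr /= -!qmulA !qmulV // !qmul1. Qed.

Lemma hform_vmulr_inv x y :
  hform alpha beta b1' b2' (vmulr_inv x) (vmulr_inv y) =
  qscal lam^-1 (hform alpha beta b1 b2 x y).
Proof.
have conj_term x1 y1 d b b' : nrm d != 0 -> qscal lam b' = mul d (mul b (qconj d)) ->
    mul (mul x1 (inv d)) (mul b' (mul (qconj (inv d)) (qconj y1))) =
    qscal lam^-1 (mul x1 (mul b (qconj y1))).
  move=> nd E; rewrite -qmulZr -qmulZl -(conj_inv_scal nl nd E).
  by rewrite !qmulA.
by rewrite /hform /vmulr_inv /= !qconjM (conj_term _ _ _ _ _ nd1 E1)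
  (conj_term _ _ _ _ _ nd2 E2) qscalD.
Qed.

Lemma vmulr_inv_sub x y : vmulr_inv (vsub x y) = vsub (vmulr_inv x) (vmulr_inv y).
Proof. by rewrite /vmulr_inv /vsub /qsub /= !qmulDl !qmulNl. Qed.

Lemma vmulr_inv_lscal q x : vmulr_inv (vlscal alpha beta q x) = vlscal alpha beta q (vmulr_inv x).
Proof. by rewrite /vmulr_inv /vlscal /= !qmulA. Qed.

Definition conj_rot (r : vec k * quat k) := (vmulr_inv r.1, qscal lam^-1 r.2).

Lemma simple_rot_conj r x :
  simple_rot alpha beta b1' b2' (conj_rot r).1 (conj_rot r).2 (vmulr_inv x) =
  vmulr_inv (simple_rot alpha beta b1 b2 r.1 r.2 x).
Proof.
rewrite /simple_rot hform_vmulr_inv qinvZ ?invr_neq0 // invrK qmulZl qmulZr qscalA.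
by rewrite mulVf // qscal1 vmulr_inv_sub vmulr_inv_lscal.
Qed.

Lemma rot_prod_conj rs x :
  rot_prod alpha beta b1' b2' (map conj_rot rs) (vmulr_inv x) =
  vmulr_inv (rot_prod alpha beta b1 b2 rs x).
Proof. by elim: rs => [|r rs IH] //=; rewrite IH simple_rot_conj. Qed.

Lemma all_valid_conj rs :
  all_valid alpha beta b1 b2 rs -> all_valid alpha beta b1' b2' (map conj_rot rs).
Proof.
elim: rs => [|r rs IH] //= [[nz E] vrs]; split; last exact: IH.
split => /=; last by rewrite qsub_conjZ E hform_vmulr_inv.
move=> h; apply: nz.
by rewrite -[r.2]qscal1 -(mulfV nl) -qscalA h /qzero qscalk mulr0.
Qed.

Lemma norm_prod_conj rs :
  norm_prod alpha beta (map conj_rot rs) = norm_prod alpha beta rs * (lam^-1 ^+ 2) ^+ size rs.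
Proof.
elim: rs => [|r rs IH] /=; first by rewrite expr0 mulr1.
by rewrite IH qnormZ; move: (lam^-1 ^+ 2) => z; rewrite exprS; ring.
Qed.

Variable O : quat k -> Prop.
Hypothesis Omul : forall x y, O x -> O y -> O (mul x y).
Hypotheses (Od1 : O d1) (Od2 : O d2) (Oi1 : O (inv d1)) (Oi2 : O (inv d2)).

Lemma vmulr_inv_lattice x : in_lattice O x -> in_lattice O (vmulr_inv x).
Proof. by case=> h1 h2; split; apply: Omul. Qed.

Lemma vmulr_lattice x : in_lattice O x -> in_lattice O (vmulr x).
Proof. by case=> h1 h2; split; apply: Omul. Qed.

Lemma preserves_lattice_conj rs :
  preserves_lattice O (rot_prod alpha beta b1 b2 rs) ->
  preserves_lattice O (rot_prod alpha beta b1' b2' (map conj_rot rs)).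
Proof.
case=> into onto; split => [x Lx|y Ly].
  rewrite -(vmulr_invK x) rot_prod_conj.
  exact/vmulr_inv_lattice/into/vmulr_lattice.
have [x [Lx ex]] := onto _ (vmulr_lattice Ly).
exists (vmulr_inv x); split; first exact: vmulr_inv_lattice.
by rewrite rot_prod_conj ex vmulr_invK.
Qed.

Lemma Hgroup_conj_sub c : Hgroup alpha beta O b1 b2 c -> Hgroup alpha beta O b1' b2' c.
Proof.
case=> nc [rs [vrs prs [t [nt ct]]]]; split => //; exists (map conj_rot rs); split.
- exact: all_valid_conj.
- exact: preserves_lattice_conj.
exists (t * lam ^+ size rs); split; first by rewrite mulf_neq0 // expf_neq0.
have cancel : (lam^-1 ^+ 2) ^+ size rs * (lam ^+ size rs) ^+ 2 = 1.
  by rewrite -!exprM mulnC -exprMn mulVf // expr1n.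
rewrite norm_prod_conj ct; move: cancel.
move: ((lam^-1 ^+ 2) ^+ size rs) (lam ^+ size rs) => A B cancel.
by rewrite -[LHS]mulr1 -cancel; ring.
Qed.

End ConjugateForms.

Lemma Hgroup_conj (k : fieldType) (alpha beta : k) (O : quat k -> Prop)
    b1 b2 b1' b2' d1 d2 lam :
  (forall x y, O x -> O y -> O (qmul alpha beta x y)) ->
  lam != 0 -> qnorm alpha beta d1 != 0 -> qnorm alpha beta d2 != 0 ->
  O d1 -> O d2 -> O (qinv alpha beta d1) -> O (qinv alpha beta d2) ->
  qscal lam b1' = qmul alpha beta d1 (qmul alpha beta b1 (qconj d1)) ->
  qscal lam b2' = qmul alpha beta d2 (qmul alpha beta b2 (qconj d2)) ->
  forall c, Hgroup alpha beta O b1 b2 c <-> Hgroup alpha beta O b1' b2' c.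
Proof.
move=> Omul nl n1 n2 O1 O2 Oi1 Oi2 E1 E2 c; split.
  exact: (Hgroup_conj_sub nl n1 n2 E1 E2 Omul O1 O2 Oi1 Oi2).
have ni1 : qnorm alpha beta (qinv alpha beta d1) != 0 by rewrite qnormV // invr_eq0.
have ni2 : qnorm alpha beta (qinv alpha beta d2) != 0 by rewrite qnormV // invr_eq0.
apply: (Hgroup_conj_sub (invr_neq0 nl) ni1 ni2 _ _ Omul Oi1 Oi2); rewrite ?qinvK //.
- by rewrite (conj_inv_scal nl n1 E1).
- by rewrite (conj_inv_scal nl n2 E2).
Qed.

Lemma int_bounded_below_min (T : Type) (P : T -> Prop) (f : T -> int) (B : int) :
  (forall t, P t -> B <= f t) -> (exists t, P t) ->
  exists t, P t /\ forall t', P t' -> f t <= f t'.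
Proof.
move=> hB [t0 Pt0]; apply: NNPP => nomin.
have above n t : P t -> n%:Z <= f t - B.
  elim: n t => [|n IH] t Pt; first by have := hB t Pt; lia.
  have := IH t Pt; rewrite le_eqVlt => /orP [/eqP e|]; last by lia.
  exfalso; apply: nomin; exists t; split => // t' Pt'.
  by have := IH t' Pt'; lia.
by have := above `|f t0 - B|%N.+1 t0 Pt0; have := lez_abs (f t0 - B); lia.
Qed.

Section DiscreteValuation.
Variable k : fieldType.
Variable v : k -> int.
Hypothesis vM : forall x y, x != 0 -> y != 0 -> v (x * y) = v x + v y.
Hypothesis vA : forall x y, x != 0 -> y != 0 -> x + y != 0 ->
                   Num.min (v x) (v y) <= v (x + y).

(* [v 0] is junk, hence the disjunct [x = 0]; [integral v x] is [val_ge x 0]. *)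
Definition val_ge (x : k) (m : int) : Prop := x = 0 \/ m <= v x.

Lemma v1 : v 1 = 0.
Proof. by have := vM (oner_neq0 k) (oner_neq0 k); rewrite mulr1; move: (v 1) => z; lia. Qed.

Lemma vN x : v (- x) = v x.
Proof.
have n1 : (-1 : k) != 0 by rewrite oppr_eq0 oner_neq0.
have vN1 : v (-1) = 0 by have := vM n1 n1; rewrite mulrNN mulr1 v1; vlia v.
have [->|nx] := eqVneq x 0; first by rewrite oppr0.
by rewrite -mulN1r vM // vN1 add0r.
Qed.

Lemma vV x : x != 0 -> v x^-1 = - v x.
Proof. by move=> nx; have := vM nx (invr_neq0 nx); rewrite mulfV // v1; vlia v. Qed.

Lemma vX x n : x != 0 -> v (x ^+ n) = n%:Z * v x.
Proof.
move=> nx; elim: n => [|n IH]; first by rewrite expr0 v1 mul0r.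
by rewrite exprS vM ?expf_neq0 // IH; vlia v.
Qed.

Lemma vf_div x y : x != 0 -> y != 0 -> v (x / y) = v x - v y.
Proof. by move=> nx ny; rewrite vM ?invr_neq0 // vV. Qed.

Lemma val_ge_le x m n : n <= m -> val_ge x m -> val_ge x n.
Proof. by move=> nm [->|h]; [left|right; lia]. Qed.

Lemma val_ge1 : val_ge 1 0. Proof. by right; rewrite v1. Qed.

Lemma val_geN x m : val_ge x m -> val_ge (- x) m.
Proof. by case=> [->|h]; [left; rewrite oppr0|right; rewrite vN]. Qed.

Lemma val_geD x y m : val_ge x m -> val_ge y m -> val_ge (x + y) m.
Proof.
case=> [->|hx]; first by rewrite add0r.
case=> [->|hy]; first by rewrite addr0; right.
have [->|nx] := eqVneq x 0; first by rewrite add0r; right.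
have [->|ny] := eqVneq y 0; first by rewrite addr0; right.
have [->|nxy] := eqVneq (x + y) 0; first by left.
by right; apply: le_trans (vA nx ny nxy); rewrite le_min hx hy.
Qed.

Lemma val_geB x y m : val_ge x m -> val_ge y m -> val_ge (x - y) m.
Proof. by move=> hx hy; apply/val_geD/val_geN. Qed.

Lemma val_geM x y m n : val_ge x m -> val_ge y n -> val_ge (x * y) (m + n).
Proof.
case=> [->|hx]; first by rewrite mul0r; left.
case=> [->|hy]; first by rewrite mulr0; left.
have [->|nx] := eqVneq x 0; first by rewrite mul0r; left.
have [->|ny] := eqVneq y 0; first by rewrite mulr0; left.
by right; rewrite vM //; vlia v.
Qed.

Section Hensel.
Hypothesis complete : forall u, v_cauchy v u -> exists l, v_converges v u l.
Variable c : k.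
Hypothesis Ic : val_ge c 1.

(* Fixed-point iteration for [y = y^2 + c], a contraction on the maximal ideal. *)
Fixpoint hensel_seq (n : nat) : k := if n is n'.+1 then hensel_seq n' ^+ 2 + c else 0.

Lemma hensel_seq_ge1 n : val_ge (hensel_seq n) 1.
Proof.
elim: n => [|n IH] /=; first by left.
by apply: val_geD => //; rewrite expr2; apply: val_ge_le (val_geM IH IH).
Qed.

Lemma hensel_seq_step n : val_ge (hensel_seq n.+1 - hensel_seq n) n.+1%:Z.
Proof.
elim: n => [|n IH]; first by rewrite /= subr0 expr2 mul0r add0r.
have -> : hensel_seq n.+2 - hensel_seq n.+1 =
          (hensel_seq n.+1 - hensel_seq n) * (hensel_seq n.+1 + hensel_seq n).
  by rewrite /=; ring.
apply: val_ge_le (val_geM IH (val_geD (hensel_seq_ge1 _) (hensel_seq_ge1 _))); lia.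
Qed.

Lemma hensel_seq_close p j : val_ge (hensel_seq (p + j) - hensel_seq p) p.+1%:Z.
Proof.
elim: j => [|j IH]; first by rewrite addn0 subrr; left.
have -> : hensel_seq (p + j.+1) - hensel_seq p =
    (hensel_seq (p + j).+1 - hensel_seq (p + j)) + (hensel_seq (p + j) - hensel_seq p).
  by rewrite addnS; ring.
by apply: val_geD IH; apply: val_ge_le (hensel_seq_step _); lia.
Qed.

Lemma hensel_seq_cauchy : v_cauchy v hensel_seq.
Proof.
move=> n; exists `|n|%N => m p hm hp.
have close : val_ge (hensel_seq m - hensel_seq p) (minn m p).+1%:Z.
  case: (leqP p m) => h; first by rewrite -(subnKC h); exact: hensel_seq_close.
  by rewrite -opprB; apply: val_geN; rewrite -(subnKC (ltnW h)); exact: hensel_seq_close.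
case: close => h; [left|right] => //; apply: le_trans h.
have : (`|n|%N <= minn m p)%N by rewrite leq_min hm hp.
have := lez_abs n; lia.
Qed.

Lemma hensel_root : exists y, y ^+ 2 - y + c = 0.
Proof.
have [l hl] := complete hensel_seq_cauchy.
apply: NNPP => nroot.
have nE : l ^+ 2 - l + c != 0 by apply/eqP => E; apply: nroot; exists l.
set n0 := Num.max (v (l ^+ 2 - l + c) + 1) 1.
have n0_ge1 : 1 <= n0 by rewrite le_max lexx orbT.
have [N HN] := hl n0.
pose m := maxn N `|n0|%N.
have close : val_ge (l - hensel_seq m) n0.
  by rewrite -opprB; apply: val_geN; case: (HN m (leq_maxl _ _)) => h; [left|right].
have step : val_ge (hensel_seq m.+1 - hensel_seq m) n0.
  apply: val_ge_le (hensel_seq_step _).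
  have := lez_abs n0; have : (`|n0|%N <= m)%N by rewrite leq_maxr. lia.
have sum_ge1 : val_ge (l + hensel_seq m) 1.
  have -> : l + hensel_seq m = (l - hensel_seq m) + (hensel_seq m + hensel_seq m) by ring.
  apply: val_geD; first exact: val_ge_le close.
  by apply: val_geD; apply: hensel_seq_ge1.
have : val_ge (l ^+ 2 - l + c) n0.
  have -> : l ^+ 2 - l + c = (l - hensel_seq m) * (l + hensel_seq m) - (l - hensel_seq m)
                             + (hensel_seq m.+1 - hensel_seq m) by rewrite /=; ring.
  apply: val_geD => //; apply: val_geB => //.
  by apply: val_ge_le (val_geM close sum_ge1); lia.
case=> [E|h]; first by rewrite E eqxx in nE.
have : v (l ^+ 2 - l + c) + 1 <= n0 by rewrite le_max lexx.
lia.
Qed.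

End Hensel.

Section IntegralNorm.
Hypothesis complete : forall u, v_cauchy v u -> exists l, v_converges v u l.
Hypothesis two_neq0 : (2%:R : k) != 0.
Hypothesis v2_ge0 : 0 < v 2%:R.
Variables alpha beta : k.
Hypothesis div : quat_division alpha beta.
Local Notation mul := (qmul alpha beta).
Local Notation nrm := (qnorm alpha beta).

Definition nval_ge (x : quat k) (m : int) : Prop := val_ge (nrm x) m.

(* Otherwise Hensel's lemma splits the reduced characteristic polynomial of
   [x] over [k], so that [x] would be a scalar with integral trace. *)
Lemma qtrace_integral x : nval_ge x 0 -> val_ge (2%:R * q0 x) 0.
Proof.
move=> hN; have [N0|nN] := eqVneq (nrm x) 0.
  by rewrite (qnorm_eq0 div N0) /=; left; rewrite mulr0.
have vN : 0 <= v (nrm x) by case: hN => [h|//]; rewrite h eqxx in nN.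
apply: NNPP => hT.
set T := 2%:R * q0 x in hT *.
have nT : T != 0 by apply/eqP => h; apply: hT; left.
have vT : v T < 0 by rewrite ltNge; apply/negP => h; apply: hT; right.
have Ic : val_ge (nrm x / T ^+ 2) 1 by right; rewrite vf_div ?expf_neq0 // vX //; vlia v.
have [y hy] := hensel_root complete Ic.
have E : (T * y) ^+ 2 - T * (T * y) + nrm x = 0.
  have -> : (T * y) ^+ 2 - T * (T * y) + nrm x = T ^+ 2 * (y ^+ 2 - y + nrm x / T ^+ 2).
    by field.
  by rewrite hy mulr0.
have scalar_val r : x = qk r -> False.
  move=> xr; move: nN vN vT; rewrite /T xr qnormk /= => nN vN vT.
  have nr : r != 0 by apply: contraNneq nN => ->; rewrite expr2 mulr0.
  by rewrite vX // in vN; rewrite vM // in vT; vlia v.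
by case: (qmul_eq0 div (qCayley_Hamilton E)) => /qsub_k_eq0 /scalar_val.
Qed.

(* Write [x + y = (x y^-1 + 1) y]: [N(x y^-1)] is integral, hence so is the
   trace of [x y^-1], hence so is [N(x y^-1 + 1)]. *)
Lemma qnorm_val_addl x y : nrm x != 0 -> nrm y != 0 -> v (nrm y) <= v (nrm x) ->
  nrm (qadd x y) != 0 -> v (nrm y) <= v (nrm (qadd x y)).
Proof.
move=> nx ny le nxy; pose z := mul x (qinv alpha beta y).
have E : qadd x y = mul (qadd z (qone k)) y.
  by rewrite qmulDl qmul1l /z -qmulA qmulVl // qmul1.
have Iz : nval_ge z 0 by right; rewrite /z qnormM qnormV // -/(_ / _) vf_div //; lia.
have I1 : nval_ge (qadd z (qone k)) 0.
  by rewrite /nval_ge qnormD1; apply: val_geD => //; apply: val_geD;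
    [exact: val_ge1|exact: qtrace_integral].
move: nxy; rewrite E qnormM => nxy.
have n1 : nrm (qadd z (qone k)) != 0 by apply: contraNneq nxy => ->; rewrite mul0r.
by rewrite vM //; case: I1 => [h|h]; [rewrite h eqxx in n1|lia].
Qed.

Lemma nval_geD x y m : nval_ge x m -> nval_ge y m -> nval_ge (qadd x y) m.
Proof.
rewrite /nval_ge => hx hy.
have [/(qnorm_eq0 div) ->|nx] := eqVneq (nrm x) 0; first by rewrite qadd0l.
have [/(qnorm_eq0 div) ->|ny] := eqVneq (nrm y) 0; first by rewrite qadd0.
have [->|nxy] := eqVneq (nrm (qadd x y)) 0; first by left.
case: hx => [h|hx]; first by rewrite h eqxx in nx.
case: hy => [h|hy]; first by rewrite h eqxx in ny.
right; case: (lerP (v (nrm y)) (v (nrm x))) => h.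
  by have := qnorm_val_addl nx ny h nxy; lia.
by have := qnorm_val_addl ny nx (ltW h); rewrite qaddC => /(_ nxy); lia.
Qed.

Lemma nval_geN x m : nval_ge x m -> nval_ge (qopp x) m.
Proof. by rewrite /nval_ge qnormN. Qed.

Lemma nval_geZ c x m : val_ge c 0 -> nval_ge x m -> nval_ge (qscal c x) m.
Proof.
move=> hc hx; rewrite /nval_ge qnormZ -[m]add0r -[0]addr0.
by apply: val_geM => //; rewrite expr2; exact: val_geM.
Qed.

Lemma nval_geM x y m n : nval_ge x m -> nval_ge y n -> nval_ge (mul x y) (m + n).
Proof. by move=> hx hy; rewrite /nval_ge qnormM; apply: val_geM. Qed.

Lemma qcomb_nval_bounded gs : exists B, forall cs, size cs = size gs ->
  (forall i, (i < size cs)%N -> integral v (nth 0 cs i)) -> nval_ge (qcomb cs gs) B.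
Proof.
elim: gs => [|g gs [B IH]].
  by exists 0 => -[|c cs] // _ _; left; rewrite /qcomb /= qnorm0.
pose Bg := if nrm g == 0 then 0 else v (nrm g).
exists (Num.min Bg B) => -[|c cs] //= [hs] hi.
apply: nval_geD.
- apply: (@val_ge_le _ Bg); first by rewrite ge_min lexx.
  apply: nval_geZ; first exact: (hi 0%N).
  by rewrite /nval_ge /Bg; case: eqP => [->|_]; [left|right].
- apply: (@val_ge_le _ B); first by rewrite ge_min lexx orbT.
  by apply: IH => // i; apply: (hi i.+1).
Qed.

(* The powers of an element of an order stay in a finitely generated module,
   so their norms [N(x)^n] have valuations bounded below. *)
Lemma order_nval_ge0 (O : quat k -> Prop) :
  is_order alpha beta v O -> forall x, O x -> nval_ge x 0.
Proof.
move=> [O1 [_ [_ [Omul [_ [[gs [_ Ogs]] _]]]]]] x Ox.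
have [B HB] := qcomb_nval_bounded gs.
have Bpow n : val_ge (nrm x ^+ n) B.
  have [y [Oy Ny]] : exists y, O y /\ nrm y = nrm x ^+ n.
    elim: n => [|n [y [Oy Ny]]]; first by exists (qone k); rewrite qnorm1 expr0.
    by exists (mul x y); split; [apply: Omul|rewrite qnormM Ny exprS].
  by rewrite -Ny; have [cs [hs [hi ->]]] := Ogs y Oy; exact: HB.
apply: NNPP => hx.
have nx : nrm x != 0 by apply/eqP => h; apply: hx; left.
have vx : v (nrm x) < 0 by rewrite ltNge; apply/negP => h; apply: hx; right.
case: (Bpow `|B|%N.+1) => [/eqP|]; first by rewrite expf_eq0 (negbTE nx) andbF.
rewrite vX // -addn1 PoszD; have := lez_abs B; have := lez_abs (- B); rewrite abszN.
move: (v (nrm x)) (`|B|%N) vx => z n; nia.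
Qed.

Variable pi : k.
Hypotheses (pi_neq0 : pi != 0) (v_pi : v pi = 1).

Definition qcoord (i : nat) (x : quat k) : k :=
  match i with 0 => q0 x | 1 => q1 x | 2 => q2 x | _ => q3 x end.

Lemma qcomb_cons (c : k) cs (g : quat k) gs :
  qcomb (c :: cs) (g :: gs) = qadd (qscal c g) (qcomb cs gs).
Proof. by []. Qed.

Lemma qcoord_sub_scal i c (x b : quat k) :
  qcoord i (qadd x (qopp (qscal c b))) = qcoord i x - c * qcoord i b.
Proof. by case: i => [|[|[|i]]]. Qed.

Lemma qcoord_eq0 (x : quat k) : (forall i, (i < 4)%N -> qcoord i x = 0) -> x = qzero k.
Proof.
case: x => x0 x1 x2 x3 h.
by move: (h 0%N erefl) (h 1%N erefl) (h 2%N erefl) (h 3%N erefl) => /= -> -> -> ->.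
Qed.

Definition spans_integrally (M P : quat k -> Prop) (gs : seq (quat k)) : Prop :=
  (forall i, (i < size gs)%N -> M (nth (qzero k) gs i)) /\
  forall x, M x -> P x -> exists cs : seq k, size cs = size gs /\
     (forall i, (i < size cs)%N -> integral v (nth 0 cs i)) /\ x = qcomb cs gs.

Section Echelon.
Variable M : quat k -> Prop.
Hypothesis Madd : forall x y, M x -> M y -> M (qadd x y).
Hypothesis Mopp : forall x, M x -> M (qopp x).
Hypothesis Mscal : forall c x, val_ge c 0 -> M x -> M (qscal c x).
Hypothesis Mbounded : forall i, exists B, forall x, M x -> val_ge (qcoord i x) B.

Definition coords_vanish (j : nat) (x : quat k) : Prop :=
  forall i, (i < j)%N -> qcoord i x = 0.

(* Adjoin an element of [M] whose [j]-th coordinate has minimal valuation;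
   it clears the [j]-th coordinate of every [x] in [M] with an integral coefficient. *)
Lemma spans_integrally_step j gs : spans_integrally M (coords_vanish j.+1) gs ->
  exists gs', spans_integrally M (coords_vanish j) gs'.
Proof.
move=> [Mgs span].
pose P b := [/\ M b, coords_vanish j b & qcoord j b != 0].
have [exP|noP] := classic (exists b, P b); last first.
  exists gs; split => // x Mx zx; apply: span => // i; rewrite ltnS leq_eqVlt.
  case/orP => [/eqP ->|]; last exact: zx.
  by apply: NNPP => nz; apply: noP; exists x; split => //; apply/eqP.
have [B HB] := Mbounded j.
have [b [[Mb zb nb] minb]] : exists b, P b /\ forall b', P b' -> v (qcoord j b) <= v (qcoord j b').
  apply: (@int_bounded_below_min _ P _ B) => // t [Mt _ nt].
  by case: (HB t Mt) => // h; rewrite h eqxx in nt.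
exists (b :: gs); split; first by case=> [|i] //= hi; apply: Mgs.
move=> x Mx zx; pose c := qcoord j x / qcoord j b.
have Ic : val_ge c 0.
  have [e|nx] := eqVneq (qcoord j x) 0; first by rewrite /c e mul0r; left.
  by right; rewrite /c vf_div //; have := minb x (And3 Mx zx nx); lia.
pose x' := qadd x (qopp (qscal c b)).
have Mx' : M x' by apply/Madd/Mopp/Mscal.
have zx' : coords_vanish j.+1 x'.
  move=> i; rewrite ltnS leq_eqVlt /x' qcoord_sub_scal => /orP [/eqP ->|hi].
    by rewrite /c mulfVK // subrr.
  by rewrite zx // zb // mulr0 subrr.
have [cs [hs [hi ex]]] := span x' Mx' zx'.
exists (c :: cs); split; first by rewrite /= hs.
split; first by case=> [|i] //= hi'; apply: hi.
by rewrite qcomb_cons -ex /x'; quat_ring.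
Qed.

Lemma spans_integrally_all : exists gs, spans_integrally M (fun _ => True) gs.
Proof.
have partial n : exists gs, spans_integrally M (coords_vanish (4 - n)) gs.
  elim: n => [|n [gs IH]].
    by exists [::]; split => // x _ /qcoord_eq0 ->; exists [::].
  case: (leqP 4 n) => hn.
    by exists gs; have -> : (4 - n.+1 = 4 - n)%N by lia.
  by apply: (@spans_integrally_step _ gs); have <- : (4 - n = (4 - n.+1).+1)%N by lia.
have [gs [Mgs span]] := partial 4%N.
by exists gs; split => // x Mx _; apply: span.
Qed.

End Echelon.

(* A coordinate of [x] is, up to the constant [kap], the scalar part of [x e];
   the trace of [pi^n x e] is integral once [pi^n] compensates [N(e)]. *)
Lemma qcoord_bounded_via i e kap : nrm e != 0 -> kap != 0 ->
  (forall x, q0 (mul x e) = kap * qcoord i x) ->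
  exists B, forall x, nval_ge x 0 -> val_ge (qcoord i x) B.
Proof.
move=> ne nk he; pose n := `|v (nrm e)|%N.
exists (- (v 2%:R + n%:Z + v kap)) => x hx.
pose y := qscal (pi ^+ n) (mul x e).
have Iy : nval_ge y 0.
  rewrite /nval_ge /y qnormZ qnormM.
  have [->|nx] := eqVneq (nrm x) 0; first by rewrite mul0r mulr0; left.
  case: hx => [h|hx]; first by rewrite h eqxx in nx.
  right; rewrite -exprM vM ?expf_neq0 ?mulf_neq0 // vM // !vX // v_pi.
  by have := lez_abs (- v (nrm e)); rewrite abszN -/n; vlia v.
have := qtrace_integral Iy.
rewrite (_ : q0 y = pi ^+ n * q0 (mul x e)) // he.
have [->|nc] := eqVneq (qcoord i x) 0; first by left.
case=> [/eqP|]; first by rewrite !mulf_eq0 (negbTE two_neq0) (negbTE nk) (negbTE nc)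
  expf_eq0 (negbTE pi_neq0) andbF.
by rewrite !vM ?mulf_neq0 ?expf_neq0 // vX // v_pi => h; right; vlia v.
Qed.

Lemma qcoord_bounded i : exists B, forall x, nval_ge x 0 -> val_ge (qcoord i x) B.
Proof.
have basis_neq0 (e : quat k) : e <> qzero k -> nrm e != 0 by exact: qnorm_neq0.
case: i => [|[|[|i]]].
- apply: (@qcoord_bounded_via 0 (qone k) 1); rewrite ?qnorm1 ?oner_neq0 //.
  by move=> x; rewrite qmul1 mul1r.
- apply: (@qcoord_bounded_via 1 (Quat 0 1 0 0) alpha); rewrite ?(alpha_neq0 div) //.
    by apply: basis_neq0 => /(congr1 (@q1 k)) /eqP; rewrite oner_eq0.
  by case=> x0 x1 x2 x3; rewrite /qmul /=; ring.
- apply: (@qcoord_bounded_via 2 (Quat 0 0 1 0) beta); rewrite ?(beta_neq0 div) //.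
    by apply: basis_neq0 => /(congr1 (@q2 k)) /eqP; rewrite oner_eq0.
  by case=> x0 x1 x2 x3; rewrite /qmul /=; ring.
- apply: (@qcoord_bounded_via i.+3 (Quat 0 0 0 1) (- (alpha * beta))).
  + by apply: basis_neq0 => /(congr1 (@q3 k)) /eqP; rewrite oner_eq0.
  + by rewrite oppr_eq0 mulf_neq0 ?(alpha_neq0 div) ?(beta_neq0 div).
  + by case=> x0 x1 x2 x3; rewrite /qmul /=; ring.
Qed.

Lemma nval_ge0_order : is_order alpha beta v (nval_ge^~ 0).
Proof.
split; first by right; rewrite qnorm1 v1.
split; first by move=> x y; apply: nval_geD.
split; first by move=> x; apply: nval_geN.
split; first by move=> x y hx hy; rewrite -[0]addr0; apply: nval_geM.
split; first by move=> c x; apply: nval_geZ.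
split.
  have [gs [Mgs span]] := spans_integrally_all (fun x y => @nval_geD x y 0)
    (fun x => @nval_geN x 0) (fun c x => @nval_geZ c x 0) qcoord_bounded.
  by exists gs; split => // x hx; apply: span.
move=> x; exists (pi ^+ `|v (nrm x)|%N); split; first by rewrite expf_neq0.
rewrite /nval_ge qnormZ; have [->|nx] := eqVneq (nrm x) 0; first by rewrite mulr0; left.
right; rewrite -exprM vM ?expf_neq0 // vX // v_pi.
by have := lez_abs (- v (nrm x)); rewrite abszN; vlia v.
Qed.

Lemma maximal_order_unit (O : quat k -> Prop) d : maximal_order alpha beta v O ->
  nrm d != 0 -> v (nrm d) = 0 -> O d /\ O (qinv alpha beta d).
Proof.
move=> [oO maxO] nd vd.
have Ogen x : nval_ge x 0 -> O x.
  by apply: (maxO _ nval_ge0_order) => y; apply: order_nval_ge0.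
by split; apply: Ogen; right; rewrite ?qnormV // ?vV // vd.
Qed.

Lemma maximal_order_Hgroup_conj (O : quat k -> Prop) b1 b2 b1' b2' d1 d2 lam :
  maximal_order alpha beta v O -> lam != 0 ->
  nrm d1 != 0 -> v (nrm d1) = 0 -> nrm d2 != 0 -> v (nrm d2) = 0 ->
  qscal lam b1' = mul d1 (mul b1 (qconj d1)) ->
  qscal lam b2' = mul d2 (mul b2 (qconj d2)) ->
  forall c, Hgroup alpha beta O b1 b2 c <-> Hgroup alpha beta O b1' b2' c.
Proof.
move=> mO nl nd1 vd1 nd2 vd2; have [O1 Oi1] := maximal_order_unit mO nd1 vd1.
have [O2 Oi2] := maximal_order_unit mO nd2 vd2.
have Omul : forall x y, O x -> O y -> O (mul x y) by case: mO => -[_ [_ [_ [Om _]]]] _.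
exact: Hgroup_conj.
Qed.

End IntegralNorm.

Section RamifiedConjugation.
Variables alpha beta : k.
Hypothesis div : quat_division alpha beta.
Hypothesis two_neq0 : (2%:R : k) != 0.
Variable pi : k.
Hypotheses (pi_neq0 : pi != 0) (v_pi : v pi = 1).
Local Notation mul := (qmul alpha beta).
Local Notation nrm := (qnorm alpha beta).

Lemma val_surj (g : int) : exists w, w != 0 /\ v w = g.
Proof.
case: (lerP 0 g) => hg.
  exists (pi ^+ `|g|%N); split; first by rewrite expf_neq0.
  by rewrite vX // v_pi mulr1 gez0_abs.
exists (pi ^+ `|g|%N)^-1; split; first by rewrite invr_eq0 expf_neq0.
by rewrite vV ?expf_neq0 // vX // v_pi mulr1 ltz0_abs //; lia.
Qed.

Lemma int_even_or_odd (m : int) : exists h : int, m = 2 * h \/ m = 2 * h + 1.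
Proof.
exists (m %/ 2)%Z; have := divz_eq m 2.
have := modz_ge0 m (isT : 2 != 0 :> int); have := ltz_pmod m (isT : 0 < 2 :> int).
move: (m %/ 2)%Z (m %% 2)%Z => a b; lia.
Qed.

(* Only the parity of [v (N z)] matters: scaling by [k^*] shifts it by an even
   number, and the ramification witness [z0] shifts it by an odd one. *)
Lemma commuting_unit_norm a z0 (g : int) :
  mul z0 a = mul a z0 -> nrm z0 != 0 -> ~ (exists m : int, v (nrm z0) = 2 * m) ->
  exists z, [/\ mul z a = mul a z, nrm z != 0 & v (nrm z) = g].
Proof.
move=> cz nz0 oz.
have [hz ez] : exists hz, v (nrm z0) = 2 * hz + 1.
  have [hz [e|e]] := int_even_or_odd (v (nrm z0)); last by exists hz.
  by case: oz; exists hz.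
have [h [eg|eg]] := int_even_or_odd g.
- have [w [nw vw]] := val_surj h; exists (qk w).
  by rewrite qmulkl qmulkr qnormk expf_neq0 // vX // vw eg.
- have [w [nw vw]] := val_surj (h - hz); exists (qscal w z0).
  rewrite qmulZl qmulZr cz qnormZ mulf_neq0 ?expf_neq0 //.
  by rewrite vM ?expf_neq0 // vX // vw ez eg; split => //; lia.
Qed.

Lemma pure_norm_class_rescale a q' t : a <> qzero k -> t != 0 ->
  nrm q' = nrm a * t ^+ 2 ->
  exists s, s != 0 /\ qadd a (qscal s^-1 q') <> qzero k /\ nrm (qscal s^-1 q') = nrm a.
Proof.
move=> na nt E.
have Nq s : s ^+ 2 = t ^+ 2 -> s != 0 -> nrm (qscal s^-1 q') = nrm a.
  by move=> es ns; rewrite qnormZ E exprVn es mulrCA mulVf ?mulr1 // expf_neq0.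
have [h|h] := classic (qadd a (qscal t^-1 q') = qzero k); last first.
  by exists t; do !split => //; exact: Nq.
exists (- t); split; first by rewrite oppr_eq0.
split; last by apply: Nq; rewrite ?oppr_eq0 // sqrrN.
rewrite invrN qscalN (qadd_eq0 h) qoppK qaddxx => /(congr1 (qscal 2%:R^-1)).
by rewrite qscalA mulVf // qscal1 /qzero qscalk mulr0.
Qed.

Lemma pure_lin_neq0 a (x y : k) : pure a -> a <> qzero k -> (x != 0 \/ y != 0) ->
  nrm (qadd (qk x) (qscal y a)) != 0.
Proof.
move=> pa na nxy; apply/eqP => N0.
have x0 : x = 0.
  by have := congr1 (@q0 k) (qnorm_eq0 div N0); rewrite /= pa mulr0 addr0.
move: N0; rewrite qnorm_pure_lin // x0 expr0n add0r => /eqP; rewrite mulf_eq0 expf_eq0 /=.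
case/orP => [y0|/eqP /(qnorm_eq0 div) //]; by case: nxy => /negP; rewrite ?x0 ?eqxx.
Qed.

Lemma ramified_norm_class a1 a2 s : pure a1 -> pure a2 -> s != 0 ->
  nrm a2 = nrm a1 * s ^+ 2 -> ramified alpha beta v a1 -> ramified alpha beta v a2.
Proof.
move=> pa1 pa2 ns E [x [y [nxy odd]]]; exists x, (y / s); split.
  by case: nxy => ?; [left|right; rewrite mulf_neq0 ?invr_neq0].
rewrite !qnorm_pure_lin // in odd *.
by have -> : x ^+ 2 + (y / s) ^+ 2 * nrm a2 = x ^+ 2 + y ^+ 2 * nrm a1 by rewrite E; field.
Qed.

Lemma ramified_unit_conj a q' t : pure a -> a <> qzero k -> ramified alpha beta v a ->
  pure q' -> t != 0 -> nrm q' = nrm a * t ^+ 2 ->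
  exists d mu, [/\ nrm d != 0, v (nrm d) = 0, mu != 0 &
                  mul d (mul a (qconj d)) = qscal mu q'].
Proof.
move=> pa na [x [y [nxy odd]]] pq nt E.
have [s [ns [nu Np]]] := pure_norm_class_rescale na nt E.
set p := qscal s^-1 q' in nu Np; set u := qadd a p in nu.
have nuu : nrm u != 0 by apply: qnorm_neq0.
have [z [cz nz vz]] := commuting_unit_norm (- v (nrm u)) (pure_lin_comm alpha beta a x y)
  (pure_lin_neq0 pa na nxy) odd.
have nd : nrm (mul u z) != 0 by rewrite qnormM mulf_neq0.
exists (mul u z), (nrm (mul u z) / s); split => //.
- by rewrite qnormM vM // vz; lia.
- by rewrite mulf_neq0 ?invr_neq0.
have da : mul (mul u z) a = mul p (mul u z).
  by rewrite -qmulA cz qmulA (pure_add_intertwines pa (pure_scal _ pq) (esym Np)) -qmulA.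
by rewrite qmulA da -qmulA qmul_conj qmulkr qscalA mulrC -qscalA /p qscalA.
Qed.

End RamifiedConjugation.

End DiscreteValuation.

Unset Implicit Arguments. Set Strict Implicit. Set Printing Implicit Defensive.

Theorem lemma4p2 (k : fieldType) (v : k -> int) (alpha beta : k)
    (O : quat k -> Prop) (a1 a2 : quat k) :
  dyadic_local_field v ->
  quat_division alpha beta ->
  maximal_order alpha beta v O ->
  pure a1 -> a1 <> qzero k -> pure a2 -> a2 <> qzero k ->
  (exists t : k, t != 0 /\ qnorm alpha beta a2 = qnorm alpha beta a1 * t ^+ 2) ->
  ramified alpha beta v a1 ->
  (exists (q : quat k) (eps : k), [/\ pure q, q <> qzero k, eps != 0 &
     forall c, Hgroup alpha beta O a1 a2 c <-> Hgroup alpha beta O q (qscal eps q) c])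
  /\
  (forall q' : quat k, pure q' -> q' <> qzero k ->
     (exists t : k, t != 0 /\ qnorm alpha beta q' = qnorm alpha beta a1 * t ^+ 2) ->
     exists eps : k, eps != 0 /\
       forall c, Hgroup alpha beta O a1 a2 c <-> Hgroup alpha beta O q' (qscal eps q') c).
Proof.
move=> [vM [vA [[pi [pi0 vpi]] [_ [complete [char0 v2]]]]]] div mO pa1 na1 pa2 na2
  [s [ns Es]] ram1.
have two0 : (2%:R : k) != 0 by apply/negP => e; have := char0 2%N; rewrite !inE /= e.
have ram2 := ramified_norm_class pa1 pa2 ns Es ram1.
have unit_conj := ramified_unit_conj vM div two0 pi0 vpi.
have equiv q' : pure q' -> q' <> qzero k ->
    (exists t : k, t != 0 /\ qnorm alpha beta q' = qnorm alpha beta a1 * t ^+ 2) ->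
    exists eps : k, eps != 0 /\
      forall c, Hgroup alpha beta O a1 a2 c <-> Hgroup alpha beta O q' (qscal eps q') c.
  move=> pq _ [t [nt Et]].
  have [d1 [mu1 [nd1 vd1 nmu1 E1]]] := unit_conj _ _ _ pa1 na1 ram1 pq nt Et.
  have Et2 : qnorm alpha beta q' = qnorm alpha beta a2 * (t / s) ^+ 2.
    by rewrite Et Es; field.
  have [d2 [mu2 [nd2 vd2 nmu2 E2]]] :=
    unit_conj _ _ _ pa2 na2 ram2 pq (mulf_neq0 nt (invr_neq0 ns)) Et2.
  exists (mu2 / mu1); split; first by rewrite mulf_neq0 ?invr_neq0.
  apply: (maximal_order_Hgroup_conj vM vA complete two0 v2 div pi0 vpi mO nmu1 nd1 vd1 nd2 vd2).
    by rewrite E1.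
  by rewrite qscalA mulrC mulfVK // E2.
split; last exact: equiv.
have [|eps [neps H]] := equiv a1 pa1 na1; first by exists 1; rewrite oner_neq0 expr1n mulr1.
by exists a1, eps.
Qed.
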